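(* Let $\mathcal{U}\subseteq\mathbb{R}^n$ be a domain and $F=u\,\phi(r,s)$ a spherically symmetric Finsler metric on $\mathcal{U}$, where $u=|y|$, $r=|x|$, $s=\langle x,y\rangle/|y|$ and $\phi$ is smooth. Put $\sigma_1=\phi-s\phi_s$ and $\rho=\phi\,[\sigma_1+(r^2-s^2)\phi_{ss}]$. Then the norm of the mean Cartan torsion of $F$ is $$\|\mathbf{I}\|=\left|\frac{(n+1)(\sigma_1\phi_s-s\phi\phi_{ss})(\sigma_1+(r^2-s^2)\phi_{ss})+(r^2-s^2)(\sigma_1\phi_{sss}+3s\phi_{ss}^2)\phi}{2u\,\sigma_1\,\rho}\right|\sqrt{\frac{r^2-s^2}{\rho}}.$$
   Context: Here $|\cdot|$, $\langle\cdot,\cdot\rangle$ are the Euclidean norm and inner product on $\mathbb{R}^n$; subscripts $s$ denote partial derivatives in $s$. For a Finsler metric $F$: $g_{ij}=\tfrac12(F^2)_{y^iy^j}$, $(g^{ij})$ its inverse, $C_{ijk}=\tfrac12\partial g_{ij}/\partial y^k$, mean Cartan torsion $I_i=g^{jk}C_{ijk}$, and $\|\mathbf{I}\|^2=g^{ij}I_iI_j$. *)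

From mathcomp Require Import all_boot all_order all_algebra.
From mathcomp Require Import all_classical all_reals all_analysis.
Set Implicit Arguments. Unset Strict Implicit. Unset Printing Implicit Defensive.
Import Order.TTheory GRing.Theory Num.Theory.
Import numFieldNormedType.Exports.
Local Open Scope classical_set_scope.
Local Open Scope ring_scope.

Fixpoint iterD (R : realType) (V : normedModType R) (vs : seq V) (f : V -> R)
  : V -> R :=
  match vs with
  | [::] => f
  | v :: vs' => fun p => 'D_v (iterD vs' f) p
  end.

Definition smooth_on (R : realType) (V : normedModType R) (D : set V)
    (f : V -> R) : Prop :=
  open D /\
  forall (vs : seq V) (p : V), D p ->
    (forall v : V, derivable (iterD vs f) p v) /\
    {for p, continuous (iterD vs f)}.

Definition dotv (R : realType) (n : nat) (x y : 'rV[R]_n) : R :=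
  \sum_(i < n) x ord0 i * y ord0 i.
Definition enorm (R : realType) (n : nat) (x : 'rV[R]_n) : R :=
  Num.sqrt (dotv x x).
Definition ebasis (R : realType) (n : nat) (i : 'I_n) : 'rV[R]_n :=
  delta_mx ord0 i.

Section Finsler.
Variables (R : realType) (n : nat) (F : 'rV[R]_n -> 'rV[R]_n -> R).

Definition dy (i : 'I_n) (f : 'rV[R]_n -> R) (y : 'rV[R]_n) : R :=
  'D_(ebasis R i) f y.

Definition fund_tensor (x y : 'rV[R]_n) (i j : 'I_n) : R :=
  2^-1 * dy j (dy i (fun w => F x w ^+ 2)) y.

Definition gmat (x y : 'rV[R]_n) : 'M[R]_n :=
  \matrix_(i, j) fund_tensor x y i j.

Definition ginv (x y : 'rV[R]_n) : 'M[R]_n := invmx (gmat x y).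

Definition cartan (x y : 'rV[R]_n) (i j k : 'I_n) : R :=
  2^-1 * dy k (fun w => fund_tensor x w i j) y.

Definition mean_cartan (x y : 'rV[R]_n) (i : 'I_n) : R :=
  \sum_(j < n) \sum_(k < n) ginv x y j k * cartan x y i j k.

Definition norm_mean_cartan (x y : 'rV[R]_n) : R :=
  Num.sqrt (\sum_(i < n) \sum_(j < n)
              ginv x y i j * mean_cartan x y i * mean_cartan x y j).
End Finsler.

Definition domain (R : realType) (n : nat) (U : set 'rV[R]_n) : Prop :=
  open U /\ connected U /\ U !=set0.

Definition finsler_metric (R : realType) (n : nat) (U : set 'rV[R]_n)
    (F : 'rV[R]_n -> 'rV[R]_n -> R) : Prop :=
  smooth_on [set p : 'rV[R]_n * 'rV[R]_n | U p.1 /\ p.2 != 0]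
            (fun p => F p.1 p.2) /\
  (forall x y, U x -> y != 0 -> 0 < F x y) /\
  (forall x y (l : R), U x -> y != 0 -> 0 < l -> F x (l *: y) = l * F x y) /\
  (forall x y (v : 'rV[R]_n), U x -> y != 0 -> v != 0 ->
     0 < \sum_(i < n) \sum_(j < n) fund_tensor F x y i j * v ord0 i * v ord0 j).

Definition sph_metric (R : realType) (n : nat) (phi : R -> R -> R)
    (x y : 'rV[R]_n) : R :=
  enorm y * phi (enorm x) (dotv x y / enorm y).

Definition phi_s (R : realType) (phi : R -> R -> R) (r s : R) : R :=
  derive1 (fun t => phi r t) s.
Definition phi_ss (R : realType) (phi : R -> R -> R) (r s : R) : R :=
  derive1 (fun t => phi_s phi r t) s.
Definition phi_sss (R : realType) (phi : R -> R -> R) (r s : R) : R :=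
  derive1 (fun t => phi_ss phi r t) s.

From Pilot Require Import Defs.
From mathcomp Require Import all_boot all_order all_algebra.
From mathcomp Require Import all_classical all_reals all_analysis.
From mathcomp Require Import ring.
Import Order.TTheory GRing.Theory Num.Theory.
Import numFieldNormedType.Exports.
Local Open Scope classical_set_scope.
Local Open Scope ring_scope.

Set Implicit Arguments. Unset Strict Implicit. Unset Printing Implicit Defensive.

(* Put a := y / |y| and m := x - s a, so that <a, m> = 0 and |m|^2 = r^2 - s^2.
   Differentiating F^2 = u^2 phi(r, s)^2 in y expresses g and C through the
   identity, a and m, with coefficients in phi, phi_s, phi_ss, phi_sss.  Then g
   can be inverted in closed form, and contracting C with g^-1 gives I = lambda m,
   so that ||I||^2 = lambda^2 <m, g^-1 m> = lambda^2 (r^2 - s^2) / rho; when y is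
   parallel to x, m = 0 and both sides vanish.
   The divisions are legitimate: phi > 0 because F > 0; rho > 0 because g is
   positive on (r^2 - s^2) phi_s a - phi m; and sigma1 > 0 because, with eps the
   sign of s, every value eps t (|s| <= t <= r) of s is attained by some direction,
   so t |-> sigma1(eps t) sqrt(r^2 - t^2) has derivative
   -t rho / (phi sqrt(r^2 - t^2)) < 0 on (|s|, r) and vanishes at t = r. *)

Section EuclideanDot.
Variables (R : realType) (n : nat).
Implicit Types (p q w : 'rV[R]_n).
Local Notation e := (ebasis R).

Lemma dotvC p q : dotv p q = dotv q p.
Proof. by apply: eq_bigr => i _; rewrite mulrC. Qed.

Lemma dotvDl p q w : dotv (p + q) w = dotv p w + dotv q w.
Proof. by rewrite /dotv -big_split; apply: eq_bigr => i _; rewrite !mxE mulrDl. Qed.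

Lemma dotvDr w p q : dotv w (p + q) = dotv w p + dotv w q.
Proof. by rewrite dotvC dotvDl !(dotvC w). Qed.

Lemma dotvZl (c : R) p q : dotv (c *: p) q = c * dotv p q.
Proof. by rewrite /dotv mulr_sumr; apply: eq_bigr => i _; rewrite !mxE mulrA. Qed.

Lemma dotvZr (c : R) p q : dotv p (c *: q) = c * dotv p q.
Proof. by rewrite dotvC dotvZl dotvC. Qed.

Lemma dotvNl p q : dotv (- p) q = - dotv p q.
Proof. by rewrite -scaleN1r dotvZl mulN1r. Qed.

Lemma dotvNr p q : dotv p (- q) = - dotv p q.
Proof. by rewrite -scaleN1r dotvZr mulN1r. Qed.

Lemma dotvBl p q w : dotv (p - q) w = dotv p w - dotv q w.
Proof. by rewrite dotvDl dotvNl. Qed.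

Lemma dotvBr w p q : dotv w (p - q) = dotv w p - dotv w q.
Proof. by rewrite dotvDr dotvNr. Qed.

Lemma dotv0l p : dotv 0 p = 0.
Proof. by rewrite -(scale0r 0) dotvZl mul0r. Qed.

Lemma dotv0r p : dotv p 0 = 0.
Proof. by rewrite dotvC dotv0l. Qed.

Lemma dotv_sumr (I : Type) (r : seq I) (F : I -> 'rV[R]_n) p :
  dotv p (\sum_(i <- r) F i) = \sum_(i <- r) dotv p (F i).
Proof. exact: (big_morph _ (dotvDr p) (dotv0r p)). Qed.

Lemma dotv_ge0 p : 0 <= dotv p p.
Proof. by apply: sumr_ge0 => i _; rewrite -expr2 sqr_ge0. Qed.

Lemma dotv_eq0 p : (dotv p p == 0) = (p == 0).
Proof.
apply/idP/eqP => [|->]; last by rewrite dotv0l.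
rewrite psumr_eq0 => [/allP p0|i _]; last by rewrite -expr2 sqr_ge0.
apply/rowP => i; rewrite mxE; apply/eqP.
by have := p0 i (mem_index_enum i); rewrite -expr2 sqrf_eq0.
Qed.

Lemma dotv_gt0 p : (0 < dotv p p) = (p != 0).
Proof. by rewrite lt_def dotv_ge0 andbT dotv_eq0. Qed.

Lemma enorm_sqr p : enorm p ^+ 2 = dotv p p.
Proof. by rewrite sqr_sqrtr // dotv_ge0. Qed.

Lemma enorm_ge0 p : 0 <= enorm p.
Proof. exact: sqrtr_ge0. Qed.

Lemma enorm_gt0 p : (0 < enorm p) = (p != 0).
Proof. by rewrite sqrtr_gt0 dotv_gt0. Qed.

Lemma dotv_ebasisr p i : dotv p (e i) = p ord0 i.
Proof.
rewrite /dotv (bigD1 i) //= big1 => [|j ji]; last by rewrite !mxE (negbTE ji) andbF mulr0.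
by rewrite !mxE !eqxx mulr1 addr0.
Qed.

Lemma sum_dotv_ebasis p q : \sum_(j < n) dotv p (e j) * dotv q (e j) = dotv p q.
Proof. by apply: eq_bigr => j _; rewrite !dotv_ebasisr. Qed.

Lemma sum_dotv_ebasis_id : \sum_(j < n) dotv (e j) (e j) = n%:R.
Proof.
under eq_bigr => j _ do rewrite dotv_ebasisr mxE !eqxx.
by rewrite sumr_const card_ord.
Qed.

Definition opmx (S : 'rV[R]_n -> 'rV[R]_n) : 'M[R]_n := \matrix_(i, j) dotv (S (e i)) (e j).

Lemma opmx_quad (S : 'rV[R]_n -> 'rV[R]_n) v :
  (forall p q, dotv (S p) q = dotv p (S q)) ->
  \sum_(i < n) \sum_(j < n) opmx S i j * dotv v (e i) * dotv v (e j) = dotv v (S v).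
Proof.
move=> Ssym; rewrite -sum_dotv_ebasis; apply: eq_bigr => i _.
rewrite Ssym (dotvC v (S (e i))) -(sum_dotv_ebasis (S (e i)) v) mulr_sumr.
by apply: eq_bigr => j _; rewrite mxE; ring.
Qed.

Lemma invmx_opmx (G M : 'rV[R]_n -> 'rV[R]_n) :
  (forall p q, dotv (G p) (M q) = dotv p q) ->
  (forall p q, dotv (M p) q = dotv p (M q)) ->
  invmx (opmx G) = opmx M.
Proof.
move=> GM Msym.
have GMK : opmx G *m opmx M = 1%:M.
  apply/matrixP => i j; rewrite !mxE.
  rewrite (eq_bigr (fun k => dotv (G (e i)) (e k) * dotv (M (e j)) (e k))) => [|k _].
    by rewrite sum_dotv_ebasis GM dotv_ebasisr mxE eqxx eq_sym.
  by rewrite !mxE; congr (_ * _); rewrite Msym dotvC.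
have [GU _] := mulmx1_unit GMK.
by rewrite -[RHS](mulKmx GU) GMK mulmx1.
Qed.

Definition rank_update (c : R) (pqs : seq ('rV[R]_n * 'rV[R]_n)) z :=
  c *: z + \sum_(pq <- pqs) dotv pq.1 z *: pq.2.

Lemma trace_rank_update (S : 'rV[R]_n -> 'rV[R]_n) c pqs :
  (forall p q, dotv (S p) q = dotv p (S q)) ->
  \sum_(j < n) dotv (S (e j)) (rank_update c pqs (e j))
  = c * \sum_(j < n) dotv (S (e j)) (e j) + \sum_(pq <- pqs) dotv pq.1 (S pq.2).
Proof.
move=> Ssym; under eq_bigr => j _ do rewrite /rank_update dotvDr dotvZr dotv_sumr.
rewrite big_split /= -mulr_sumr; congr (_ + _); rewrite exchange_big /=.
apply: eq_bigr => pq _; rewrite -sum_dotv_ebasis; apply: eq_bigr => j _.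
by rewrite dotvZr Ssym (dotvC (e j)).
Qed.

Lemma exists_unit_dotv x p (tau : R) : 0 < dotv x x -> dotv x p = 0 -> p != 0 ->
  tau ^+ 2 <= dotv x x -> exists w, dotv w w = 1 /\ dotv x w = tau.
Proof.
move=> x0 xp p0 tau_le.
have xx0 : dotv x x != 0 by rewrite gt_eqF.
have pp0 : dotv p p != 0 by rewrite dotv_eq0.
set c := Num.sqrt ((dotv x x - tau ^+ 2) / (dotv x x * dotv p p)).
have c2 : c ^+ 2 = (dotv x x - tau ^+ 2) / (dotv x x * dotv p p).
  by rewrite sqr_sqrtr // divr_ge0 ?subr_ge0 // mulr_ge0 ?dotv_ge0.
exists ((tau / dotv x x) *: x + c *: p); split.
  rewrite !(dotvDl, dotvDr, dotvZl, dotvZr) xp (dotvC p) xp.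
  by rewrite [c * (c * _)]mulrA -expr2 c2; field; rewrite ?xx0 ?pp0.
by rewrite dotvDr !dotvZr xp mulr0 addr0 divfK.
Qed.

End EuclideanDot.

Ltac expand_dotv :=
  repeat progress rewrite ?dotvDl ?dotvDr ?dotvZl ?dotvZr ?dotvBl ?dotvBr
                          ?dotvNl ?dotvNr.

Section DirectionalDerivative.
Variables (R : realType) (V : normedModType R).
Implicit Types (f g : V -> R) (x v : V).

Lemma is_deriveD_fun f g x v df dg : is_derive x v f df -> is_derive x v g dg ->
  is_derive x v (fun w => f w + g w) (df + dg).
Proof. by move=> fx gx; have := is_deriveD fx gx. Qed.

Lemma is_deriveN_fun f x v df : is_derive x v f df ->
  is_derive x v (fun w => - f w) (- df).
Proof. by move=> fx; have := is_deriveN fx. Qed.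

Lemma is_deriveM_fun f g x v df dg : is_derive x v f df -> is_derive x v g dg ->
  is_derive x v (fun w => f w * g w) (f x * dg + g x * df).
Proof. by move=> fx gx; have := is_deriveM fx gx. Qed.

Lemma is_deriveV_fun f x v df : f x != 0 -> is_derive x v f df ->
  is_derive x v (fun w => (f w)^-1) (- (f x) ^- 2 * df).
Proof.
move=> fx0 [fx dfx]; apply: DeriveDef; first exact: derivableV.
by rewrite deriveV // dfx.
Qed.

Lemma derive_along_line f x v : 'D_v f x = 'D_1 (fun h : R => f (h *: v + x)) 0.
Proof.
rewrite /derive.
have -> : (fun h : R => h^-1 *: ((f \o shift x) (h *: v) - f x)) = (fun h : R =>
    h^-1 *: (((fun h' : R => f (h' *: v + x)) \o shift 0) h%:A - f (0 *: v + x))).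
  by apply/funext => h /=; rewrite addr0 scale0r add0r [_%:A]mulr1.
by [].
Qed.

Lemma is_derive_comp_fun (chi : R -> R) f x v c d :
  is_derive (f x) 1 chi c -> is_derive x v f d ->
  is_derive x v (fun w => chi (f w)) (c * d).
Proof.
move=> dchi [/derivable1P fx dfx].
have dline : is_derive (0 : R) 1 (fun h : R => f (h *: v + x)) d.
  by apply: DeriveDef; [exact: fx | rewrite -derive_along_line].
have dchi' : is_derive ((fun h : R => f (h *: v + x)) 0) 1 chi c.
  by rewrite /= scale0r add0r.
have [dcomp dcompE] := is_derive1_comp dchi' dline.
by apply: DeriveDef; [apply/derivable1P | rewrite derive_along_line -dcompE].
Qed.

Lemma is_derive_of_quadratic f x v c k :
  (forall h : R, f (h *: v + x) = f x + h * c + h ^+ 2 * k) -> is_derive x v f c.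
Proof.
move=> fE.
have quotE : {near 0^', (fun h : R => c + h * k)
    =1 (fun h : R => h^-1 *: ((f \o shift x) (h *: v) - f x))}.
  apply: filterS (@nbhs_dnbhs_neq R 0) => h /= h0.
  rewrite fE; change (c + h * k = h^-1 * (f x + h * c + h ^+ 2 * k - f x)).
  by field.
have lim_quot : (fun h : R => h^-1 *: ((f \o shift x) (h *: v) - f x)) @ 0^' --> c.
  apply: cvg_trans (near_eq_cvg quotE) _.
  have lin : (fun h : R => c + h * k) @ 0^' --> c + 0 * k.
    by apply: cvgD; [exact: cvg_cst | apply: cvgM; [exact: cvg_within | exact: cvg_cst]].
  by rewrite mul0r addr0 in lin.
by split; [apply/cvg_ex; exists c | exact: cvg_lim].
Qed.

End DirectionalDerivative.

Lemma is_derive_continuous (R : realType) (f : R -> R) (t d : R) :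
  is_derive t 1 f d -> {for t, continuous f}.
Proof. by case=> /derivable1_diffP /differentiable_continuous. Qed.

Section EuclideanDerivative.
Variables (R : realType) (n : nat).
Implicit Types (p w v : 'rV[R]_n).

Lemma is_derive_dotv p w v : is_derive w v (dotv p) (dotv p v).
Proof.
by apply: (is_derive_of_quadratic (k := 0)) => h; rewrite dotvDr dotvZr; ring.
Qed.

Lemma is_derive_dotvl p w v : is_derive w v (fun z => dotv z p) (dotv p v).
Proof.
by apply: (is_derive_of_quadratic (k := 0)) => h; rewrite dotvDl dotvZl (dotvC v); ring.
Qed.

Lemma is_derive_dotv_self w v : is_derive w v (fun z => dotv z z) (2 * dotv w v).
Proof.
apply: (is_derive_of_quadratic (k := dotv v v)) => h.
by expand_dotv; rewrite (dotvC v w); ring.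
Qed.

Lemma is_derive_enorm w v : w != 0 -> is_derive w v (@enorm R n) (dotv w v / enorm w).
Proof.
move=> w0; have ww0 : 0 < dotv w w by rewrite dotv_gt0.
have := is_derive_comp_fun (f := fun z => dotv z z) (is_derive1_sqrt ww0) (is_derive_dotv_self w v).
move=> /is_derive_eq; apply; rewrite /enorm; field.
by rewrite gt_eqF // sqrtr_gt0.
Qed.

Lemma near_neq0 (y : 'rV[R]_n) : y != 0 -> \forall w \near y, w != 0.
Proof. by move=> y0; have /(_ _ cvg_id y0) := @cvgr_neq0 R _ _ (nbhs y) _ id y. Qed.

End EuclideanDerivative.

(* For a unit vector a, a vector m orthogonal to it with |m|^2 = L, u = |y| and
   p_k the k-th s-derivative of phi: gop and ginvop are g and g^-1 as self-adjoint
   operators, and cartanop v z is the vector C(v, z, .). *)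
Section Frame.
Variables (R : realType) (n : nat) (a m : 'rV[R]_n) (s L u p0 p1 p2 p3 : R).

Definition sph_sigma1 := p0 - s * p1.
Definition sph_rho := p0 * (sph_sigma1 + L * p2).

Definition gop v := (p0 * sph_sigma1) *: v + (p0 * p1 * (dotv m v + s * dotv a v)) *: a
  + (p0 * p1 * dotv a v + (p1 ^+ 2 + p0 * p2) * dotv m v) *: m.

Definition ginv_aa := (sph_rho + p1 ^+ 2 * L) / (p0 ^+ 2 * sph_rho) - (p0 * sph_sigma1)^-1.
Definition ginv_am := - (p1 / (p0 * sph_rho)).
Definition ginv_mm := - (p2 / (sph_sigma1 * sph_rho)).

Definition ginvop v := (p0 * sph_sigma1)^-1 *: v
  + (ginv_aa * dotv a v + ginv_am * dotv m v) *: a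
  + (ginv_am * dotv a v + ginv_mm * dotv m v) *: m.

Definition aperp v := v - dotv a v *: a.

Definition cartanop v z := (2 * u)^-1 *: ((p1 * sph_sigma1 - s * p0 * p2) *:
      (dotv (aperp v) z *: m + dotv m v *: aperp z + dotv m z *: aperp v)
  + ((3 * p1 * p2 + p0 * p3) * dotv m v * dotv m z) *: m).

Definition mean_cartan_coef :=
  ((n.+1)%:R * (sph_sigma1 * p1 - s * p0 * p2) * (sph_sigma1 + L * p2)
   + L * (sph_sigma1 * p3 + 3 * s * p2 ^+ 2) * p0)
  / (2 * u * sph_sigma1 * sph_rho).

Hypotheses (a_unit : dotv a a = 1) (a_perp_m : dotv a m = 0) (m_sqr : dotv m m = L).

Let m_perp_a : dotv m a = 0. Proof. by rewrite dotvC. Qed.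

Ltac expand_frame := expand_dotv; rewrite ?a_unit ?a_perp_m ?m_perp_a ?m_sqr.

Lemma gop_sym p q : dotv (gop p) q = dotv p (gop q).
Proof. by rewrite /gop; expand_frame; rewrite (dotvC p a) (dotvC p m); ring. Qed.

Lemma ginvop_sym p q : dotv (ginvop p) q = dotv p (ginvop q).
Proof. by rewrite /ginvop; expand_frame; rewrite (dotvC p a) (dotvC p m); ring. Qed.

Lemma sph_rho_gt0 : p0 != 0 -> 0 < L ->
  (forall v, v != 0 -> 0 < dotv v (gop v)) -> 0 < sph_rho.
Proof.
move=> p0_neq0 L_gt0 g_pos.
pose v := (L * p1) *: a - p0 *: m.
have mv : dotv m v = - (p0 * L) by rewrite /v; expand_frame; ring.
have v0 : v != 0.
  apply: (contra_neq _ (mulf_neq0 p0_neq0 (lt0r_neq0 L_gt0))) => v0.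
  by apply/eqP; rewrite -oppr_eq0 -mv v0 dotv0r.
have := g_pos v v0.
have -> : dotv v (gop v) = p0 ^+ 2 * L * sph_rho.
  by rewrite /v /gop /sph_rho /sph_sigma1; expand_frame; ring.
by rewrite pmulr_rgt0 // mulr_gt0 // lt_def sqrf_eq0 p0_neq0 sqr_ge0.
Qed.

Hypotheses (p0_neq0 : p0 != 0) (sigma1_neq0 : sph_sigma1 != 0) (rho_neq0 : sph_rho != 0).

Let sigma1_neq0' : p0 - s * p1 != 0 := sigma1_neq0.

Let sigma1L_neq0 : p0 - s * p1 + L * p2 != 0.
Proof. by move: rho_neq0; rewrite mulf_eq0 negb_or => /andP[]. Qed.

Ltac field_frame :=
  rewrite /mean_cartan_coef /ginv_aa /ginv_am /ginv_mm /sph_rho /sph_sigma1;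
  field; rewrite ?p0_neq0 ?sigma1_neq0' ?sigma1L_neq0.

Lemma dotv_gop_ginvop p q : dotv (gop p) (ginvop q) = dotv p q.
Proof.
by rewrite /gop /ginvop; expand_frame; rewrite (dotvC p a) (dotvC p m); field_frame.
Qed.

Lemma dotv_ginvop_m : dotv m (ginvop m) = L / sph_rho.
Proof. by rewrite /ginvop; expand_frame; field_frame. Qed.

Lemma ginvop_rank_update : ginvop =1 rank_update (p0 * sph_sigma1)^-1
  [:: (a, ginv_aa *: a + ginv_am *: m); (m, ginv_am *: a + ginv_mm *: m)].
Proof.
move=> v; rewrite /ginvop /rank_update !big_cons big_nil /=.
by apply/rowP => k; rewrite !mxE; ring.
Qed.

Lemma cartanop_rank_update v : cartanop v =1 rank_update
  ((p1 * sph_sigma1 - s * p0 * p2) * dotv m v / (2 * u))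
  [:: (aperp v, ((p1 * sph_sigma1 - s * p0 * p2) / (2 * u)) *: m);
      (a, (- (p1 * sph_sigma1 - s * p0 * p2) * dotv m v / (2 * u)) *: a);
      (m, (2 * u)^-1 *: ((p1 * sph_sigma1 - s * p0 * p2) *: aperp v
                         + ((3 * p1 * p2 + p0 * p3) * dotv m v) *: m))].
Proof.
move=> z; rewrite /cartanop /rank_update !big_cons big_nil /= {2}/aperp.
by apply/rowP => k; rewrite !mxE; ring.
Qed.

Lemma trace_ginvop :
  \sum_(j < n) dotv (ebasis R j) (ginvop (ebasis R j))
  = n%:R / (p0 * sph_sigma1) + ginv_aa + ginv_mm * L.
Proof.
under eq_bigr => j _ do rewrite ginvop_rank_update.
rewrite (@trace_rank_update _ _ id) // sum_dotv_ebasis_id !big_cons big_nil /=.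
by expand_frame; ring.
Qed.

Lemma contract_ginvop_cartanop v : u != 0 ->
  \sum_(j < n) dotv (ginvop (ebasis R j)) (cartanop v (ebasis R j))
  = mean_cartan_coef * dotv m v.
Proof.
move=> u0; under eq_bigr => j _ do rewrite cartanop_rank_update.
rewrite trace_rank_update; last exact: ginvop_sym.
under eq_bigr => j _ do rewrite dotvC.
rewrite trace_ginvop !big_cons big_nil /= /ginvop /aperp; expand_frame.
by rewrite (dotvC v a) (dotvC v m) mulrSr; field_frame; rewrite u0.
Qed.

End Frame.

(* psi k stands for the k-th s-derivative of phi(|x|, .); sqF w is F(x, w)^2, and
   fund_form w and cartan_form w are g and C at y = w, evaluated on vectors. *)
Section SphericalDerivatives.
Variables (R : realType) (n : nat) (x : 'rV[R]_n) (psi : nat -> R -> R).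

Definition sph_s (w : 'rV[R]_n) : R := dotv x w / enorm w.

Hypothesis psi_deriv :
  forall k w, w != 0 -> is_derive (sph_s w) 1 (psi k) (psi k.+1 (sph_s w)).

Lemma is_derive_sph_s w v : w != 0 ->
  is_derive w v sph_s ((dotv x v - sph_s w * dotv w v / enorm w) / enorm w).
Proof.
move=> w0; have u0 : enorm w != 0 by rewrite gt_eqF // enorm_gt0.
have := is_deriveM_fun (is_derive_dotv x w v) (is_deriveV_fun u0 (is_derive_enorm v w0)).
by move=> /is_derive_eq; apply; rewrite /sph_s; field.
Qed.

Lemma is_derive_psi_sph_s k w v : w != 0 -> is_derive w v (fun z => psi k (sph_s z))
  (psi k.+1 (sph_s w) * ((dotv x v - sph_s w * dotv w v / enorm w) / enorm w)).
Proof. by move=> w0; apply: is_derive_comp_fun (psi_deriv k w0) (is_derive_sph_s v w0). Qed.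

Ltac derive_step :=
  match goal with
  | |- is_derive _ _ (fun _ => ?c) _ => apply: is_derive_cst
  | |- _ != 0 => assumption
  | |- is_derive _ _ (fun z => dotv ?p z) _ => apply: is_derive_dotv
  | |- is_derive _ _ (fun z => dotv z ?p) _ => apply: is_derive_dotvl
  | |- is_derive _ _ (fun z => enorm z) _ => apply: is_derive_enorm
  | |- is_derive _ _ (fun z => sph_s z) _ => apply: is_derive_sph_s
  | |- is_derive _ _ (fun z => psi ?k (sph_s z)) _ => apply: is_derive_psi_sph_s
  | |- is_derive _ _ (fun z => @?A z + @?B z) _ => eapply (@is_deriveD_fun _ _ A B)
  | |- is_derive _ _ (fun z => - @?A z) _ => eapply (@is_deriveN_fun _ _ A)
  | |- is_derive _ _ (fun z => @?A z * @?B z) _ => eapply (@is_deriveM_fun _ _ A B)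
  | |- is_derive _ _ (fun z => (@?A z)^-1) _ => eapply (@is_deriveV_fun _ _ A)
  end.

Ltac derive_by_rules := eapply is_derive_eq; first by repeat derive_step.

Definition sqF w := enorm w * psi 0 (sph_s w) * (enorm w * psi 0 (sph_s w)).

Definition sqF_deriv w v :=
  2 * (psi 0 (sph_s w) * (psi 0 (sph_s w) - sph_s w * psi 1 (sph_s w)) * dotv w v
       + psi 0 (sph_s w) * psi 1 (sph_s w) * enorm w * dotv x v).

Definition fund_form w v z :=
  let u := enorm w in let s := sph_s w in
  let p0 := psi 0 s in let p1 := psi 1 s in let p2 := psi 2 s in
  let mz := dotv x z - s * dotv w z / u in
  p0 * (p0 - s * p1) * dotv v z
  + (p1 * (p0 - s * p1) - s * p0 * p2) * mz * dotv w v / u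
  + (p1 * p1 + p0 * p2) * mz * dotv x v + p0 * p1 * dotv w z * dotv x v / u.

Definition cartan_form w v z t :=
  let u := enorm w in let s := sph_s w in
  let p0 := psi 0 s in let p1 := psi 1 s in let p2 := psi 2 s in let p3 := psi 3 s in
  let mv y := dotv x y - s * dotv w y / u in
  let h y y' := dotv y y' - dotv w y * dotv w y' / (u * u) in
  (2 * u)^-1 * ((p1 * (p0 - s * p1) - s * p0 * p2) * (h v z * mv t + h z t * mv v + h v t * mv z)
                + (3 * p1 * p2 + p0 * p3) * mv v * mv z * mv t).

Lemma is_derive_sqF w v : w != 0 -> is_derive w v sqF (sqF_deriv w v).
Proof.
move=> w0; have u0 : enorm w != 0 by rewrite gt_eqF // enorm_gt0.
by rewrite /sqF; derive_by_rules; rewrite /sqF_deriv /=; field.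
Qed.

Lemma is_derive_sqF_deriv w v z : w != 0 ->
  is_derive w z (fun w => sqF_deriv w v) (2 * fund_form w v z).
Proof.
move=> w0; have u0 : enorm w != 0 by rewrite gt_eqF // enorm_gt0.
by rewrite /sqF_deriv; derive_by_rules; rewrite /fund_form /=; field.
Qed.

Lemma is_derive_fund_form w v z t : w != 0 ->
  is_derive w t (fun w => fund_form w v z) (2 * cartan_form w v z t).
Proof.
move=> w0; have u0 : enorm w != 0 by rewrite gt_eqF // enorm_gt0.
by rewrite /fund_form; derive_by_rules; rewrite /cartan_form /=; field.
Qed.

Definition frame_a (w : 'rV[R]_n) := (enorm w)^-1 *: w.
Definition frame_m w := x - sph_s w *: frame_a w.
Definition frame_L w := enorm x ^+ 2 - sph_s w ^+ 2.

Definition frame_gop w := gop (frame_a w) (frame_m w) (sph_s w)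
  (psi 0 (sph_s w)) (psi 1 (sph_s w)) (psi 2 (sph_s w)).
Definition frame_ginvop w := ginvop (frame_a w) (frame_m w) (sph_s w) (frame_L w)
  (psi 0 (sph_s w)) (psi 1 (sph_s w)) (psi 2 (sph_s w)).
Definition frame_cartanop w := cartanop (frame_a w) (frame_m w) (sph_s w) (enorm w)
  (psi 0 (sph_s w)) (psi 1 (sph_s w)) (psi 2 (sph_s w)) (psi 3 (sph_s w)).
Definition frame_sigma1 w := sph_sigma1 (sph_s w) (psi 0 (sph_s w)) (psi 1 (sph_s w)).
Definition frame_rho w := sph_rho (sph_s w) (frame_L w)
  (psi 0 (sph_s w)) (psi 1 (sph_s w)) (psi 2 (sph_s w)).
Definition frame_coef w := mean_cartan_coef n (sph_s w) (frame_L w) (enorm w)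
  (psi 0 (sph_s w)) (psi 1 (sph_s w)) (psi 2 (sph_s w)) (psi 3 (sph_s w)).

Section FrameOfDirection.
Variables (w : 'rV[R]_n).
Hypothesis w0 : w != 0.

Let u0 : enorm w != 0. Proof. by rewrite gt_eqF // enorm_gt0. Qed.
Let dotv_ww : dotv w w = enorm w * enorm w. Proof. by rewrite -expr2 enorm_sqr. Qed.

Lemma dotv_frame_a_x : dotv (frame_a w) x = sph_s w.
Proof. by rewrite dotvZl dotvC mulrC. Qed.

Lemma frame_a_unit : dotv (frame_a w) (frame_a w) = 1.
Proof. by rewrite dotvZl dotvZr dotv_ww; field. Qed.

Lemma frame_a_perp : dotv (frame_a w) (frame_m w) = 0.
Proof. by rewrite /frame_m dotvBr dotvZr frame_a_unit dotv_frame_a_x mulr1 subrr. Qed.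

Lemma frame_m_sqr : dotv (frame_m w) (frame_m w) = frame_L w.
Proof.
rewrite /frame_m /frame_a /frame_L /sph_s; expand_dotv.
by rewrite dotv_ww (dotvC w x) -enorm_sqr; field.
Qed.

Lemma frame_m_eq0 : frame_L w = 0 -> frame_m w = 0.
Proof. by move=> L0; apply/eqP; rewrite -dotv_eq0 frame_m_sqr L0. Qed.

Lemma fund_form_frame v z : fund_form w v z = dotv (frame_gop w v) z.
Proof.
rewrite /fund_form /frame_gop /gop /frame_m /frame_a /sph_sigma1 /=.
by expand_dotv; field.
Qed.

Lemma cartan_form_frame v z t : cartan_form w v z t = dotv (frame_cartanop w v z) t.
Proof.
rewrite /cartan_form /frame_cartanop /cartanop /aperp /frame_m /frame_a /sph_sigma1 /=.
by expand_dotv; field.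
Qed.

End FrameOfDirection.

End SphericalDerivatives.

Section TangentIntercept.
Variables (R : realType) (f f' f'' : R -> R) (b r : R).
Hypotheses (b_ge0 : 0 <= b) (b_lt_r : b < r).
Hypothesis f_deriv : forall t, b <= t <= r -> is_derive t 1 f (f' t).
Hypothesis f'_deriv : forall t, b <= t <= r -> is_derive t 1 f' (f'' t).

Let q_gt0 (t : R) : b <= t < r -> 0 < r ^+ 2 - t ^+ 2.
Proof.
move=> /andP[bt tr]; have t0 : 0 <= t := le_trans b_ge0 bt.
have rt : 0 < r + t by apply: lt_le_trans (le_lt_trans t0 tr) _; rewrite lerDl.
by rewrite subr_sqr mulr_gt0 // subr_gt0.
Qed.

Let intercept (t : R) := f t - t * f' t.
Let q (t : R) := r ^+ 2 - t ^+ 2.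
Let E (t : R) := intercept t * Num.sqrt (q t).

Let is_derive_intercept (t : R) : b <= t <= r -> is_derive t 1 intercept (- (t * f'' t)).
Proof.
move=> bt.
have := is_deriveD_fun (f_deriv bt) (is_deriveN_fun (is_deriveM_fun (is_derive_id t 1) (f'_deriv bt))).
by move=> /is_derive_eq; apply => /=; ring.
Qed.

Let is_derive_q (t : R) : is_derive t 1 q (- (2 * t)).
Proof.
apply: (is_derive_of_quadratic (k := -1)) => h.
by rewrite /q -[h *: 1]/(h * 1); ring.
Qed.

Let is_derive_E (t : R) : b < t < r ->
  is_derive t 1 E (- t * (f'' t * q t + intercept t) / Num.sqrt (q t)).
Proof.
move=> /andP[bt tr]; have bt' : b <= t <= r by rewrite !ltW.
have qt : 0 < q t by rewrite q_gt0 // ltW.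
have := is_deriveM_fun (is_derive_intercept bt')
  (is_derive_comp_fun (f := q) (is_derive1_sqrt qt) (is_derive_q t)).
move=> /is_derive_eq; apply; set sq := Num.sqrt (q t).
have sq0 : sq != 0 by rewrite gt_eqF // sqrtr_gt0.
by rewrite -(sqr_sqrtr (ltW qt)) -/sq; field.
Qed.

Let E_continuous : {within `[b, r], continuous E}.
Proof.
apply: continuous_in_subspaceT => t; rewrite inE /= in_itv /= => bt.
apply: continuousM; first exact: is_derive_continuous (is_derive_intercept bt).
apply: (continuous_comp (f := q)); first exact: is_derive_continuous (is_derive_q t).
exact: sqrt_continuous.
Qed.

Lemma tangent_intercept_gt0 :
  (forall t, b < t < r -> 0 < f t - t * f' t + (r ^+ 2 - t ^+ 2) * f'' t) ->
  0 < f b - b * f' b.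
Proof.
move=> pos; have [c] := MVT b_lt_r is_derive_E E_continuous.
rewrite in_itv /= => /andP[bc cr] Ec.
have qc : 0 < q c by rewrite q_gt0 // ltW.
have Er : E r = 0 by rewrite /E /q subrr sqrtr0 mulr0.
have Eb : 0 < E b.
  move/eqP: Ec; rewrite Er sub0r eqr_oppLR => /eqP ->.
  rewrite !mulNr opprK !mulr_gt0 ?invr_gt0 ?sqrtr_gt0 ?qc ?subr_gt0 //.
    exact: le_lt_trans bc.
  have := pos c; rewrite bc cr => /(_ isT).
  by rewrite /intercept /q addrC (mulrC (f'' c)).
by move: Eb; rewrite /E pmulr_lgt0 // sqrtr_gt0 q_gt0 // lexx b_lt_r.
Qed.

End TangentIntercept.

Section DeriveSnd.
Variables (R : realType) (g : R * R -> R) (r t : R).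

Let quotient_snd : (fun h : R => h^-1 *: ((g \o shift (r, t)) (h *: ((0, 1) : R * R)) - g (r, t)))
  = (fun h : R => h^-1 *: (((fun t' => g (r, t')) \o shift t) (h *: 1) - g (r, t))).
Proof.
apply/funext => h /=; congr (_ *: (g _ - _)).
by apply/pair_equal_spec; split => /=; rewrite ?scaler0 ?add0r // [h *: 1]mulr1.
Qed.

Lemma derive_snd : 'D_((0, 1) : R * R) g (r, t) = 'D_1 (fun t' => g (r, t')) t.
Proof. by rewrite /derive quotient_snd. Qed.

Lemma derivable_snd :
  derivable g (r, t) ((0, 1) : R * R) -> derivable (fun t' => g (r, t')) t 1.
Proof. by rewrite /derivable quotient_snd. Qed.

End DeriveSnd.

Section SphericallySymmetricMetric.
Variables (R : realType) (n : nat) (phi : R -> R -> R) (D : set (R * R)) (x : 'rV[R]_n).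
Hypothesis phi_smooth : smooth_on D (fun p : R * R => phi p.1 p.2).
Hypothesis D_sph_s : forall w : 'rV[R]_n, w != 0 -> D (enorm x, sph_s x w).

Definition phi_deriv (k : nat) (t : R) : R :=
  Defs.iterD (nseq k ((0, 1) : R * R)) (fun p : R * R => phi p.1 p.2) (enorm x, t).

Lemma phi_deriv_S k t : phi_deriv k.+1 t = derive1 (phi_deriv k) t.
Proof. by rewrite derive1E -derive_snd. Qed.

Lemma phi_deriv0 : phi_deriv 0 = phi (enorm x).
Proof. by []. Qed.

Lemma phi_deriv1 : phi_deriv 1 = phi_s phi (enorm x).
Proof. by apply/funext => t; rewrite phi_deriv_S. Qed.

Lemma phi_deriv2 : phi_deriv 2 = phi_ss phi (enorm x).
Proof. by apply/funext => t; rewrite phi_deriv_S phi_deriv1. Qed.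

Lemma phi_deriv3 : phi_deriv 3 = phi_sss phi (enorm x).
Proof. by apply/funext => t; rewrite phi_deriv_S phi_deriv2. Qed.

Lemma is_derive_phi_deriv k w : w != 0 ->
  is_derive (sph_s x w) 1 (phi_deriv k) (phi_deriv k.+1 (sph_s x w)).
Proof.
move=> w0; have [dk _] := phi_smooth.2 (nseq k ((0, 1) : R * R)) _ (D_sph_s w0).
by apply: DeriveDef; [exact: derivable_snd | rewrite phi_deriv_S derive1E].
Qed.

Local Notation psi := phi_deriv.
Local Notation e := (ebasis R).

Lemma fund_tensor_sph w i j : w != 0 ->
  fund_tensor (sph_metric phi) x w i j = fund_form x psi w (e i) (e j).
Proof.
move=> w0; rewrite /fund_tensor /dy.
have sqE : (fun z => sph_metric phi x z ^+ 2) = sqF x psi.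
  by apply/funext => z; rewrite expr2.
have dsq : \forall z \near w,
    'D_(e i) (fun z => sph_metric phi x z ^+ 2) z = sqF_deriv x psi z (e i).
  apply: filterS (near_neq0 w0) => z z0.
  by rewrite sqE; case: (is_derive_sqF is_derive_phi_deriv (e i) z0).
rewrite (near_eq_derive _ dsq).
case: (is_derive_sqF_deriv is_derive_phi_deriv (e i) (e j) w0) => _ ->.
by rewrite mulrA mulVf ?mul1r // pnatr_eq0.
Qed.

Lemma cartan_sph w i j k : w != 0 ->
  cartan (sph_metric phi) x w i j k = cartan_form x psi w (e i) (e j) (e k).
Proof.
move=> w0; rewrite /cartan /dy.
have fundE : \forall z \near w,
    fund_tensor (sph_metric phi) x z i j = fund_form x psi z (e i) (e j).
  by apply: filterS (near_neq0 w0) => z z0; exact: fund_tensor_sph.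
rewrite (near_eq_derive _ fundE).
case: (is_derive_fund_form is_derive_phi_deriv (e i) (e j) (e k) w0) => _ ->.
by rewrite mulrA mulVf ?mul1r // pnatr_eq0.
Qed.

Lemma sph_s_onto w : w != 0 -> 0 < frame_L x w ->
  forall tau, tau ^+ 2 <= enorm x ^+ 2 -> exists2 w', w' != 0 & sph_s x w' = tau.
Proof.
move=> w0 L0 tau; rewrite enorm_sqr => tau_le.
have xx0 : 0 < dotv x x.
  by rewrite -enorm_sqr; apply: lt_le_trans L0 _; rewrite lerBlDr lerDl sqr_ge0.
pose p := frame_a w - (sph_s x w / dotv x x) *: x.
have xp : dotv x p = 0.
  by rewrite dotvBr dotvZr (dotvC x) dotv_frame_a_x divfK ?subrr // gt_eqF.
have p_neq0 : p != 0.
  rewrite -dotv_gt0 (_ : dotv p p = frame_L x w / dotv x x) ?divr_gt0 //.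
  have u0 : enorm w != 0 by rewrite gt_eqF // enorm_gt0.
  rewrite dotvBl !dotvBr frame_a_unit // !dotvZr !dotvZl (dotvC w x).
  by rewrite /frame_L /sph_s enorm_sqr; field; rewrite u0 gt_eqF.
have [w' [ww' xw']] := exists_unit_dotv xx0 xp p_neq0 tau_le.
exists w'; first by rewrite -dotv_eq0 ww' oner_neq0.
by rewrite /sph_s /enorm ww' sqrtr1 divr1.
Qed.

Hypothesis F_gt0 : forall w : 'rV[R]_n, w != 0 -> 0 < sph_metric phi x w.
Hypothesis g_posdef : forall w v : 'rV[R]_n, w != 0 -> v != 0 ->
  0 < \sum_(i < n) \sum_(j < n) fund_tensor (sph_metric phi) x w i j * v ord0 i * v ord0 j.

Lemma phi_gt0 w : w != 0 -> 0 < psi 0 (sph_s x w).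
Proof. by move=> w0; have := F_gt0 w0; rewrite /sph_metric pmulr_rgt0 // enorm_gt0. Qed.

Lemma gmat_sph w : w != 0 -> gmat (sph_metric phi) x w = opmx (frame_gop x psi w).
Proof.
by move=> w0; apply/matrixP => i j; rewrite !mxE fund_tensor_sph // fund_form_frame.
Qed.

Lemma quad_fund_tensor (w v : 'rV[R]_n) : w != 0 ->
  \sum_(i < n) \sum_(j < n) fund_tensor (sph_metric phi) x w i j * v ord0 i * v ord0 j
  = dotv v (frame_gop x psi w v).
Proof.
move=> w0; rewrite -(opmx_quad _ (gop_sym _ _ _ _ _ _)) -gmat_sph //.
by apply: eq_bigr => i _; apply: eq_bigr => j _; rewrite !dotv_ebasisr mxE.
Qed.

Lemma frame_rho_gt0 w : w != 0 -> 0 < frame_L x w -> 0 < frame_rho x psi w.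
Proof.
move=> w0 L0.
apply: (sph_rho_gt0 (frame_a_unit w0) (frame_a_perp x w0) (frame_m_sqr x w0)) => //.
  exact/lt0r_neq0/phi_gt0.
by move=> v v0; rewrite -quad_fund_tensor //; exact: g_posdef.
Qed.

Section Sigma1Positivity.
Variable w : 'rV[R]_n.
Hypotheses (w0 : w != 0) (L_gt0 : 0 < frame_L x w).

Let s0 := sph_s x w.
Let eps : R := if 0 <= s0 then 1 else -1.

Let eps2 : eps * eps = 1.
Proof. by rewrite /eps; case: ifP => _; rewrite ?mulr1 ?mulrNN ?mulr1. Qed.

Let s0E : s0 = eps * `|s0|.
Proof.
rewrite /eps; case: ifP => [s0_ge0 | s0_lt0]; first by rewrite mul1r ger0_norm.
by rewrite ltr0_norm ?mulN1r ?opprK // ltNge s0_lt0.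
Qed.

Let sqr_eps (t : R) : (eps * t) ^+ 2 = t ^+ 2.
Proof. by rewrite exprMn expr2 eps2 mul1r. Qed.

Let abs_s0_lt_r : `|s0| < enorm x.
Proof.
rewrite ltNge; apply/negP => rb; move: L_gt0.
rewrite /frame_L -/s0 -(real_normK (num_real s0)) subr_gt0 ltNge => /negP; apply.
by apply: lerXn2r; rewrite ?nnegrE ?enorm_ge0.
Qed.

Let sph_s_onto_signed (t : R) : `|s0| <= t <= enorm x ->
  exists2 w', w' != 0 & sph_s x w' = eps * t.
Proof.
move=> /andP[bt tr]; apply: sph_s_onto w0 L_gt0 _ _; rewrite sqr_eps.
by apply: lerXn2r; rewrite ?nnegrE ?enorm_ge0 // (le_trans _ bt).
Qed.

Let is_derive_psi_signed k (t : R) : `|s0| <= t <= enorm x ->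
  is_derive t 1 (fun t => psi k (eps * t)) (psi k.+1 (eps * t) * eps).
Proof.
move=> /sph_s_onto_signed [w' w'0 sw']; have := is_derive_phi_deriv k w'0.
rewrite sw' => dk; apply: (is_derive_comp_fun (f := fun t => eps * t) dk).
by apply: (is_derive_of_quadratic (k := 0)) => h; rewrite -[h *: 1]/(h * 1); ring.
Qed.

Let rho_signed_gt0 (t : R) : `|s0| < t < enorm x ->
  0 < psi 0 (eps * t) - t * (psi 1 (eps * t) * eps) + (enorm x ^+ 2 - t ^+ 2) * psi 2 (eps * t).
Proof.
move=> /andP[bt tr]; have [w' w'0 sw'] : exists2 w', w' != 0 & sph_s x w' = eps * t.
  by apply: sph_s_onto_signed; rewrite !ltW.
have L' : frame_L x w' = enorm x ^+ 2 - t ^+ 2 by rewrite /frame_L sw' sqr_eps.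
have L'_gt0 : 0 < frame_L x w'.
  by rewrite L' subr_gt0 ltrXn2r // (le_trans (normr_ge0 _) (ltW bt)).
have := frame_rho_gt0 w'0 L'_gt0; rewrite /frame_rho /sph_rho /sph_sigma1 sw' L'.
rewrite pmulr_rgt0 -?sw' ?phi_gt0 // sw' => rho_pos.
by rewrite (_ : t * (psi 1 (eps * t) * eps) = eps * t * psi 1 (eps * t)) //; ring.
Qed.

Lemma frame_sigma1_gt0 : 0 < frame_sigma1 x psi w.
Proof.
rewrite /frame_sigma1 /sph_sigma1 -/s0 s0E.
have -> : eps * `|s0| * psi 1 (eps * `|s0|) = `|s0| * (psi 1 (eps * `|s0|) * eps) by ring.
apply: (tangent_intercept_gt0 (normr_ge0 s0) abs_s0_lt_r (is_derive_psi_signed 0) _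
  rho_signed_gt0) => t bt.
have := is_deriveM_fun (is_derive_psi_signed 1 bt) (is_derive_cst eps t 1).
by move=> /is_derive_eq; apply => /=; rewrite mulr0 add0r mulrCA eps2 mulr1.
Qed.

End Sigma1Positivity.

Lemma frame_denoms_neq0 w : w != 0 -> 0 < frame_L x w ->
  [/\ psi 0 (sph_s x w) != 0, frame_sigma1 x psi w != 0 & frame_rho x psi w != 0].
Proof.
move=> w0 L0; split; apply: lt0r_neq0.
- exact: phi_gt0.
- exact: frame_sigma1_gt0.
- exact: frame_rho_gt0.
Qed.

Lemma ginv_sph w : w != 0 -> 0 < frame_L x w ->
  ginv (sph_metric phi) x w = opmx (frame_ginvop x psi w).
Proof.
move=> w0 L0; have [p0 sigma0 rho0] := frame_denoms_neq0 w0 L0.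
rewrite /ginv gmat_sph //; apply: invmx_opmx; last exact: ginvop_sym.
exact: (dotv_gop_ginvop (frame_a_unit w0) (frame_a_perp x w0) (frame_m_sqr x w0)).
Qed.

Lemma mean_cartan_sph w i : w != 0 ->
  mean_cartan (sph_metric phi) x w i = frame_coef x psi w * dotv (frame_m x w) (e i).
Proof.
move=> w0; have := dotv_ge0 (frame_m x w); rewrite frame_m_sqr // le_eqVlt.
case/orP => [/eqP/esym/(frame_m_eq0 w0) m0 | L0].
  rewrite m0 dotv0l mulr0 /mean_cartan big1 // => j _; rewrite big1 // => k _.
  rewrite cartan_sph // cartan_form_frame // /frame_cartanop /cartanop m0.
  by rewrite !(dotv0l, scaler0, scale0r, addr0, mulr0, mul0r).
have [p0 sigma0 rho0] := frame_denoms_neq0 w0 L0.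
rewrite /mean_cartan ginv_sph //.
under eq_bigr => j _ do under eq_bigr => k _ do
  rewrite !mxE cartan_sph // cartan_form_frame //.
under eq_bigr => j _ do rewrite sum_dotv_ebasis.
apply: (contract_ginvop_cartanop _ (frame_a_unit w0) (frame_a_perp x w0) (frame_m_sqr x w0)) => //.
by rewrite gt_eqF // enorm_gt0.
Qed.

Lemma norm_mean_cartan_sph w : w != 0 -> norm_mean_cartan (sph_metric phi) x w
  = `|frame_coef x psi w| * Num.sqrt (frame_L x w / frame_rho x psi w).
Proof.
move=> w0; rewrite /norm_mean_cartan.
have := dotv_ge0 (frame_m x w); rewrite frame_m_sqr // le_eqVlt.
case/orP => [/eqP L0 | L0].
  rewrite -L0 mul0r sqrtr0 mulr0 big1 ?sqrtr0 // => i _; rewrite big1 // => j _.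
  by rewrite !mean_cartan_sph // (frame_m_eq0 w0 (esym L0)) !dotv0l !mulr0.
have [p0 sigma0 rho0] := frame_denoms_neq0 w0 L0.
rewrite ginv_sph // (_ : \sum_i _ = frame_coef x psi w ^+ 2 * \sum_(i < n) \sum_(j < n)
    opmx (frame_ginvop x psi w) i j * dotv (frame_m x w) (e i) * dotv (frame_m x w) (e j)).
  rewrite opmx_quad; last exact: ginvop_sym.
  rewrite (dotv_ginvop_m (frame_a_perp x w0) (frame_m_sqr x w0)) //.
  by rewrite sqrtrM ?sqr_ge0 // sqrtr_sqr.
rewrite mulr_sumr; apply: eq_bigr => i _; rewrite mulr_sumr; apply: eq_bigr => j _.
by rewrite !mean_cartan_sph //; ring.
Qed.

End SphericallySymmetricMetric.

Theorem corollary1 (R : realType) (n : nat) (U : set 'rV[R]_n)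
    (phi : R -> R -> R) :
  domain U ->
  (exists D : set (R * R),
      smooth_on D (fun p => phi p.1 p.2) /\
      (forall x y : 'rV[R]_n, U x -> y != 0 ->
         D (enorm x, dotv x y / enorm y))) ->
  finsler_metric U (sph_metric phi) ->
  forall x y : 'rV[R]_n, U x -> y != 0 ->
    let u := enorm y in
    let r := enorm x in
    let s := dotv x y / enorm y in
    let p := phi r s in
    let ps := phi_s phi r s in
    let pss := phi_ss phi r s in
    let psss := phi_sss phi r s in
    let sigma1 := p - s * ps in
    let rho := p * (sigma1 + (r ^+ 2 - s ^+ 2) * pss) in
    norm_mean_cartan (sph_metric phi) x y =
      `| ((n.+1)%:R * (sigma1 * ps - s * p * pss)
             * (sigma1 + (r ^+ 2 - s ^+ 2) * pss)
          + (r ^+ 2 - s ^+ 2) * (sigma1 * psss + 3 * s * pss ^+ 2) * p)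
         / (2 * u * sigma1 * rho) |
      * Num.sqrt ((r ^+ 2 - s ^+ 2) / rho).
Proof.
move=> _ [D [phi_smooth D_sph_s]] [_ [F_gt0 [_ g_posdef]]] x y Ux y0; cbv zeta.
rewrite (norm_mean_cartan_sph phi_smooth (D_sph_s x ^~ Ux) (F_gt0 x ^~ Ux)
  (fun w v => g_posdef x w v Ux) y0).
rewrite /frame_coef /frame_rho /frame_L /mean_cartan_coef /sph_rho /sph_sigma1 /sph_s.
by rewrite phi_deriv0 phi_deriv1 phi_deriv2 phi_deriv3.
Qed.
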